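(* Every $d$-variate narrow-sense geometric law is a $d$-variate wide-sense geometric law. For $d=2$ this inclusion is proper: the function $\bar F_{n_1,n_2}=(1/2)^{\max(n_1,n_2)}(2/5)^{\min(n_1,n_2)}$, $n_1,n_2\in\mathbb{N}_0$, is the survival function of an exchangeable bivariate wide-sense geometric law which is not narrow-sense geometric; its correlation coefficient equals $-1/8$.
   Context: $\mathbb{N}_0=\{0,1,\ldots\}$. Narrow-sense geometric law: for $p_I\in[0,1]$, $\emptyset\ne I\subseteq\{1,\ldots,d\}$, with $\prod_{I\ni k}p_I<1$, independent $E_I$ with $\mathbb{P}(E_I>n)=p_I^n$, $\tau_k=\min\{E_I:k\in I\}$. Wide-sense geometric law: for $\tilde p_I\in[0,1]$, $I\subseteq\{1,\ldots,d\}$, $\sum_I\tilde p_I=1$, $\sum_{I\not\ni k}\tilde p_I<1$, run i.i.d. trials with outcome $I$ of probability $\tilde p_I$, $\tilde E_I$ the first trial with outcome $I$, $\tau_k=\min\{\tilde E_I:k\in I\}$. *)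

From Stdlib Require Import Reals.
From mathcomp Require Import all_boot.

Set Implicit Arguments.
Unset Strict Implicit.
Unset Printing Implicit Defensive.

Local Open Scope R_scope.

(* Narrow-sense parameters (p_I), I a nonempty subset of {1..d} (here 'I_d);
   the value p set0 is irrelevant. *)
Definition narrow_valid (d : nat) (p : {set 'I_d} -> R) : Prop :=
  (forall I : {set 'I_d}, I != set0 -> 0 <= p I <= 1) /\
  (forall k : 'I_d, \big[Rmult/1]_(I : {set 'I_d} | k \in I) p I < 1).

(* Joint survival function P(tau_1 > n_1, ..., tau_d > n_d) of the narrow-sense
   law: tau > n iff E_I > max_{k in I} n_k for all I; by independence this is
   the product of P(E_I > m) = p_I ^ m. *)
Definition narrow_surv (d : nat) (p : {set 'I_d} -> R) (n : 'I_d -> nat) : R :=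
  \big[Rmult/1]_(I : {set 'I_d} | I != set0) (p I ^ (\max_(k in I) n k)%N).

Definition wide_valid (d : nat) (q : {set 'I_d} -> R) : Prop :=
  (forall I : {set 'I_d}, 0 <= q I) /\
  \big[Rplus/0]_(I : {set 'I_d}) q I = 1 /\
  (forall k : 'I_d, \big[Rplus/0]_(I : {set 'I_d} | k \notin I) q I < 1).

(* Joint survival function of the wide-sense law: the event {tau > n} only
   depends on the first N := max_k n_k i.i.d. trials; trial t+1 (t : 'I_N) has
   outcome w t.  tau_k > n_k iff no trial among the first n_k has an outcome
   containing k. *)
Definition wide_surv (d : nat) (q : {set 'I_d} -> R) (n : 'I_d -> nat) : R :=
  \big[Rplus/0]_(w : {ffun 'I_(\max_(k : 'I_d) n k)%N -> {set 'I_d}})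
     ((\big[Rmult/1]_(t : 'I_(\max_(k : 'I_d) n k)%N) q (w t)) *
      (if [forall k : 'I_d, forall t : 'I_(\max_(k : 'I_d) n k)%N,
             (t < n k)%N ==> (k \notin w t)] then 1 else 0)).

Definition Fbar (n1 n2 : nat) : R :=
  (1/2) ^ (maxn n1 n2) * (2/5) ^ (minn n1 n2).

Definition Fbar2 (n : 'I_2 -> nat) : R := Fbar (n ord0) (n ord_max).

(* Probability mass P(tau_1 = n1, tau_2 = n2) of an N_0^2-valued random vector
   with survival function F (inclusion-exclusion; for n1 = 0 or n2 = 0 this
   gives 0, consistent with tau >= 1, i.e. F(-1, .) = F(0, .)). *)
Definition pmf2 (F : nat -> nat -> R) (n1 n2 : nat) : R :=
  F n1.-1 n2.-1 - F n1 n2.-1 - F n1.-1 n2 + F n1 n2.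

(* Iterated double series (used only with nonnegative terms). *)
Definition dsum (f : nat -> nat -> R) (l : R) : Prop :=
  exists g : nat -> R, (forall i, infinite_sum (f i) (g i)) /\ infinite_sum g l.

Definition correlation2 (F : nat -> nat -> R) (rho : R) : Prop :=
  exists m1 m2 s1 s2 c : R,
    dsum (fun i j => INR i * pmf2 F i j) m1 /\
    dsum (fun i j => INR j * pmf2 F i j) m2 /\
    dsum (fun i j => INR i ^ 2 * pmf2 F i j) s1 /\
    dsum (fun i j => INR j ^ 2 * pmf2 F i j) s2 /\
    dsum (fun i j => INR i * INR j * pmf2 F i j) c /\
    0 < s1 - m1 ^ 2 /\ 0 < s2 - m2 ^ 2 /\
    rho = (c - m1 * m2) / sqrt ((s1 - m1 ^ 2) * (s2 - m2 ^ 2)).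

From Stdlib Require Import Reals Lra.
From Coquelicot Require Import Coquelicot.
From mathcomp Require Import all_boot Rstruct.

(* Narrow into wide: at every trial run all the shocks [I] as independent
   coins that fire with probability [1 - p I], and let the outcome be the union
   of the shocks that fired; the first outcome containing [k] then occurs at
   the minimum of the [E_I] over the shocks [I] containing [k].  The example is
   wide-sense with weight [1/5] on the empty set and on [{1,2}], and [3/10] on
   the singletons.  A bivariate narrow-sense survival function is
   [a^n1 b^n2 c^(max n1 n2)]; matching [Fbar] at (1,0), (0,1) and (1,1) forces
   [c = 5/4 > 1].  The moments follow by summation by parts against closed
   forms of the tail sums of [Fbar]; every remainder is a polynomial times a
   geometric sequence. *)

Set Implicit Arguments.
Unset Strict Implicit.
Unset Printing Implicit Defensive.

Local Open Scope R_scope.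

Lemma sumR_ge0 (I : finType) (P : pred I) (F : I -> R) :
  (forall i, P i -> 0 <= F i) -> 0 <= \big[Rplus/0]_(i | P i) F i.
Proof. by move=> F_ge0; elim/big_ind: _ => // [|x y]; lra. Qed.

Lemma prodR_ge0 (I : finType) (P : pred I) (F : I -> R) :
  (forall i, P i -> 0 <= F i) -> 0 <= \big[Rmult/1]_(i | P i) F i.
Proof. by move=> F_ge0; elim/big_ind: _ => //; [lra | exact: Rmult_le_pos]. Qed.

Lemma prodR_indicator (I : finType) (b : pred I) :
  \big[Rmult/1]_(i : I) (if b i then 1 else 0) = if [forall i, b i] then 1 else 0.
Proof.
case: (boolP [forall i, b i]) => [/forallP b_all | /forallPn [i /negbTE bi]].
  by apply: big1 => i _; rewrite b_all.
by rewrite (bigD1 i) //= bi Rmult_0_l.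
Qed.

Lemma prodR_ord_split (N m : nat) (a b : R) : (m <= N)%N ->
  \big[Rmult/1]_(t < N) (if (t < m)%N then a else b) = a ^ m * b ^ (N - m).
Proof.
move=> le_mN; have pow_big c k : \big[Rmult/1]_(0 <= t < k) c = c ^ k.
  elim: k => [|k IHk]; first by rewrite big_geq.
  by rewrite big_nat_recr //= IHk Rmult_comm.
rewrite -(big_mkord xpredT (fun t => if (t < m)%N then a else b)).
rewrite (big_cat_nat (leq0n m) le_mN) /=.
congr (_ * _); rewrite -pow_big.
  by apply: eq_big_nat => t /andP [_ ->].
by rewrite -{1}[m]add0n big_addn; apply: eq_big_nat => t _; rewrite ltnNge leq_addl.
Qed.

(** * Narrow-sense laws are wide-sense *)

Lemma wide_survE (d : nat) (q : {set 'I_d} -> R) (n : 'I_d -> nat) :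
  wide_surv q n = \big[Rmult/1]_(t < \max_(k : 'I_d) n k)
     \big[Rplus/0]_(K : {set 'I_d})
       (q K * (if [forall k, (t < n k)%N ==> (k \notin K)] then 1 else 0)).
Proof.
rewrite bigA_distr_bigA; apply: eq_bigr => w _.
rewrite big_split /= prodR_indicator; congr (_ * (if _ then _ else _)).
by apply/forallP/forallP => w_avoid x; apply/forallP => y;
  move/forallP: (w_avoid y) => /(_ x).
Qed.

Definition shock_weight (d : nat) (p : {set 'I_d} -> R) (I : {set 'I_d}) (b : bool) : R :=
  if I == set0 then (if b then 0 else 1) else (if b then 1 - p I else p I).

Definition wide_of_narrow (d : nat) (p : {set 'I_d} -> R) (K : {set 'I_d}) : R :=
  \big[Rplus/0]_(f : {ffun {set 'I_d} -> bool} | \bigcup_(I | f I) I == K)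
     \big[Rmult/1]_(I : {set 'I_d}) shock_weight p I (f I).

Lemma wide_of_narrow_avoid (d : nat) (p : {set 'I_d} -> R) (a : pred 'I_d) :
  \big[Rplus/0]_(K : {set 'I_d})
      (wide_of_narrow p K * (if [forall k, a k ==> (k \notin K)] then 1 else 0)) =
  \big[Rmult/1]_(I : {set 'I_d}) (if (I != set0) && [exists k in I, a k] then p I else 1).
Proof.
set avoids := fun K : {set 'I_d} => [forall k, a k ==> (k \notin K)].
have avoids_cup (f : {ffun {set 'I_d} -> bool}) :
    avoids (\bigcup_(I | f I) I) = [forall I, f I ==> avoids I].
  apply/forallP/forallP => [cup_avoid I | all_avoid k].
    apply/implyP => fI; apply/forallP => k; apply/implyP => ak.
    by apply: contra (implyP (cup_avoid k) ak) => kI; apply/bigcupP; exists I.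
  apply/implyP => ak; apply/bigcupP => -[I fI kI].
  by move: (implyP (all_avoid I) fI) => /forallP /(_ k); rewrite ak kI.
transitivity (\big[Rplus/0]_(f : {ffun {set 'I_d} -> bool})
    (\big[Rmult/1]_I shock_weight p I (f I) *
     (if avoids (\bigcup_(I | f I) I) then 1 else 0))).
  rewrite (partition_big (fun f : {ffun {set 'I_d} -> bool} => \bigcup_(I | f I) I) predT) //=.
  apply: eq_bigr => K _; rewrite /wide_of_narrow big_distrl /=.
  by apply: eq_bigr => f /eqP ->.
transitivity (\big[Rplus/0]_(f : {ffun {set 'I_d} -> bool}) \big[Rmult/1]_I
    (shock_weight p I (f I) * (if f I ==> avoids I then 1 else 0))).
  by apply: eq_bigr => f _; rewrite avoids_cup -prodR_indicator -big_split.
rewrite -(bigA_distr_bigA (fun I b => shock_weight p I b * (if b ==> avoids I then 1 else 0))).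
apply: eq_bigr => I _; rewrite big_bool /= /shock_weight.
have [-> | I0] /= := eqVneq I set0; first by case: ifP => _; lra.
case: (boolP [exists k in I, a k]) => [/existsP [k /andP [kI ak]] | /existsPn none].
  have -> : avoids I = false by apply/negP => /forallP /(_ k); rewrite ak kI.
  lra.
have -> : avoids I by apply/forallP => k; move: (none k); case: (k \in I); case: (a k).
lra.
Qed.

Lemma wide_surv_wide_of_narrow (d : nat) (p : {set 'I_d} -> R) (n : 'I_d -> nat) :
  wide_surv (wide_of_narrow p) n = narrow_surv p n.
Proof.
rewrite wide_survE.
under eq_bigr => t _ do rewrite (wide_of_narrow_avoid p (fun k => (t < n k)%N)).
rewrite exchange_big /narrow_surv [RHS]big_mkcond /=; apply: eq_bigr => I _.
have [_ | I0] /= := eqVneq I set0; first by rewrite big1.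
have le_max : (\max_(k in I) n k <= \max_(k : 'I_d) n k)%N.
  by apply/bigmax_leqP => k _; exact: leq_bigmax.
rewrite -[p I ^ _]Rmult_1_r -[in RHS](pow1 (\max_k n k - \max_(k in I) n k)).
rewrite -(prodR_ord_split _ _ le_max); apply: eq_bigr => t _.
congr (if _ then _ else _); apply/idP/idP => [/existsP [k /andP [kI lt_tk]] | lt_tmax].
  exact: leq_trans lt_tk (leq_bigmax_cond _ kI).
apply: contraTT lt_tmax => /existsPn none; rewrite -leqNgt.
by apply/bigmax_leqP => k kI; move: (none k); rewrite kI /= -leqNgt.
Qed.

Lemma wide_of_narrow_valid (d : nat) (p : {set 'I_d} -> R) :
  narrow_valid p -> wide_valid (wide_of_narrow p).
Proof.
move=> [p01 p_lt1]; split; [|split].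
- move=> K; apply: sumR_ge0 => f _; apply: prodR_ge0 => I _; rewrite /shock_weight.
  have [_ | I0] := eqVneq I set0; first by case: (f I); lra.
  by have := p01 I I0; case: (f I); lra.
- have := wide_of_narrow_avoid p pred0.
  rewrite [X in _ = X -> _]big1 => [<- | I _]; last first.
    by case: ifP => // /andP [_ /existsP [k /andP []]].
  apply: eq_bigr => K _.
  by rewrite (_ : [forall k, _] = true) ?Rmult_1_r //; apply/forallP.
- move=> k; apply: Rle_lt_trans (p_lt1 k); right.
  have -> : \big[Rplus/0]_(K : {set 'I_d} | k \notin K) wide_of_narrow p K =
      \big[Rplus/0]_(K : {set 'I_d}) (wide_of_narrow p K *
        (if [forall k', pred1 k k' ==> (k' \notin K)] then 1 else 0)).
    rewrite big_mkcond; apply: eq_bigr => K _.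
    have -> : [forall k', pred1 k k' ==> (k' \notin K)] = (k \notin K).
      apply/forallP/idP => [/(_ k) | kK k']; first by rewrite /= eqxx.
      by apply/implyP => /eqP ->.
    by case: ifP => _; lra.
  rewrite wide_of_narrow_avoid [RHS]big_mkcond; apply: eq_bigr => I _.
  congr (if _ then _ else _).
  apply/andP/idP => [[_ /existsP [k' /andP [k'I /eqP <-]]] // | kI].
  split; last by apply/existsP; exists k; rewrite kI /=.
  by apply: contraTneq kI => ->; rewrite in_set0.
Qed.

(** * The bivariate example *)

Lemma ord2P (i : 'I_2) : i = ord0 \/ i = ord_max.
Proof. by case: i => [[|[|m]] lt_i2]; [left | right | by []]; apply: val_inj. Qed.

Lemma forall_ord2 (P : pred 'I_2) : [forall k, P k] = P ord0 && P ord_max.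
Proof.
by apply/forallP/andP => [all_P | [P0 P1] k]; [split | case: (ord2P k) => ->].
Qed.

Lemma big_ord2 (T : Type) (idx : T) (op : Monoid.law idx) (F : 'I_2 -> T) :
  \big[op/idx]_(k < 2) F k = op (F ord0) (F ord_max).
Proof. by rewrite big_ord_recr big_ord1; congr (op (F _) _); apply: val_inj. Qed.

Definition set_of_bits (b0 b1 : bool) : {set 'I_2} :=
  [set i | if i == ord0 then b0 else b1].

Lemma in_set_of_bits (b0 b1 : bool) :
  (ord0 \in set_of_bits b0 b1 = b0) * (ord_max \in set_of_bits b0 b1 = b1).
Proof. by rewrite !inE. Qed.

Lemma big_set_ord2 (T : Type) (idx : T) (op : Monoid.com_law idx) (g : {set 'I_2} -> T) :
  \big[op/idx]_(K : {set 'I_2}) g K =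
  \big[op/idx]_(b0 : bool) \big[op/idx]_(b1 : bool) g (set_of_bits b0 b1).
Proof.
rewrite pair_big (reindex (fun b => set_of_bits b.1 b.2)) //.
exists (fun K : {set 'I_2} => (ord0 \in K, ord_max \in K)) => [[b0 b1] _ | K _].
  by rewrite !in_set_of_bits.
by apply/setP => i; rewrite inE; case: (ord2P i) => ->.
Qed.

Definition Fbar_wide (K : {set 'I_2}) : R :=
  if (ord0 \in K) == (ord_max \in K) then 1/5 else 3/10.

Lemma Fbar_wide_valid : wide_valid Fbar_wide.
Proof.
rewrite /wide_valid /Fbar_wide big_set_ord2 !big_bool !in_set_of_bits /=.
split; [by move=> K; case: ifP; lra | split; first lra].
move=> k; rewrite big_mkcond big_set_ord2 !big_bool.
by case: (ord2P k) => ->; rewrite /= !in_set_of_bits /=; lra.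
Qed.

Lemma wide_surv_Fbar_wide (n : 'I_2 -> nat) : wide_surv Fbar_wide n = Fbar2 n.
Proof.
rewrite wide_survE big_ord2 /Fbar2 /Fbar.
have le_min_max : (minn (n ord0) (n ord_max) <= maxn (n ord0) (n ord_max))%N.
  exact: leq_trans (geq_minl _ _) (leq_maxl _ _).
rewrite -[in RHS](subnKC le_min_max) pow_add.
transitivity (\big[Rmult/1]_(t < maxn (n ord0) (n ord_max))
    (if (t < minn (n ord0) (n ord_max))%N then 1/5 else 1/2)).
  apply: eq_bigr => t _; have := ltn_ord t; rewrite leq_max leq_min.
  rewrite big_set_ord2 !big_bool /Fbar_wide !forall_ord2 !in_set_of_bits /=.
  by case: (t < n ord0)%N; case: (t < n ord_max)%N => //= _; lra.
rewrite prodR_ord_split // (_ : 1/5 = 1/2 * (2/5)); last lra.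
by rewrite Rpow_mult_distr; ring.
Qed.

Lemma Fbar_sym (n1 n2 : nat) : Fbar n1 n2 = Fbar n2 n1.
Proof. by rewrite /Fbar maxnC minnC. Qed.

Lemma narrow_surv_ord2 (p : {set 'I_2} -> R) (n : 'I_2 -> nat) :
  narrow_surv p n = p (set_of_bits true false) ^ n ord0 *
    p (set_of_bits false true) ^ n ord_max *
    p (set_of_bits true true) ^ maxn (n ord0) (n ord_max).
Proof.
have set0_bits b0 b1 : (set_of_bits b0 b1 == set0) = ~~ b0 && ~~ b1.
  apply/eqP/andP => [/setP K0 | [/negbTE-> /negbTE->]].
    by move: (K0 ord0) (K0 ord_max); rewrite !in_set_of_bits !inE => -> ->.
  by apply/setP => i; rewrite !inE; case: ifP.
rewrite /narrow_surv big_mkcond big_set_ord2 !big_bool /= !set0_bits /=.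
rewrite !(big_mkcond (fun k => k \in _)) !big_ord2 !in_set_of_bits /=.
by rewrite max0n maxn0; ring.
Qed.

Lemma Fbar_not_narrow (p : {set 'I_2} -> R) :
  narrow_valid p -> ~ (forall n : 'I_2 -> nat, narrow_surv p n = Fbar2 n).
Proof.
move=> [p01 _] surv.
set a := p (set_of_bits true false); set b := p (set_of_bits false true).
set c := p (set_of_bits true true).
have c_le1 : c <= 1.
  suff /p01 [] : set_of_bits true true != set0 by [].
  by apply/set0Pn; exists ord0; rewrite in_set_of_bits.
have := surv (fun k => if k == ord0 then 1%N else 0%N).
have := surv (fun k => if k == ord0 then 0%N else 1%N).
have := surv (fun k => 1%N).
rewrite !narrow_surv_ord2 /Fbar2 /Fbar /= -/a -/b -/c.
move=> abc bc ac.
have a25 : a = 2/5 by nra.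
nra.
Qed.

(** * Summation by parts *)

Lemma is_lim_seq_pow_mul_geom (k : nat) (r : R) :
  Rabs r < 1 -> is_lim_seq (fun n => INR n ^ k * r ^ n) 0.
Proof.
move=> r_lt1; set a := fun n => INR n.+1 ^ k.
have a_neq0 n : a n <> 0 by apply: pow_nonzero; exact: not_0_INR.
have lim_pow (u : nat -> R) (l : R) m :
    is_lim_seq u l -> is_lim_seq (fun n => u n ^ m) (l ^ m).
  move=> lim_u; elim: m => [|m IHm] /=; first exact: is_lim_seq_const.
  exact: is_lim_seq_mult'.
have ratio : is_lim_seq (fun n => Rabs (a n.+1 / a n)) 1.
  have lim_inv : is_lim_seq (fun n => / INR n.+1) 0.
    have lim_INR := proj1 (is_lim_seq_incr_1 _ _) is_lim_seq_INR.
    exact: is_lim_seq_inv lim_INR _.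
  have := lim_pow _ _ k (is_lim_seq_plus' _ _ _ _ (is_lim_seq_const 1) lim_inv).
  rewrite Rplus_0_r pow1; apply: is_lim_seq_ext => n.
  have -> : 1 + / INR n.+1 = INR n.+2 / INR n.+1.
    by rewrite [INR n.+2]S_INR; field; exact: not_0_INR.
  rewrite /a /Rdiv Rpow_mult_distr pow_inv Rabs_pos_eq //.
  apply: Rmult_le_pos; first by apply: pow_le; exact: pos_INR.
  by apply/Rlt_le/Rinv_0_lt_compat/pow_lt/lt_0_INR/Nat.lt_0_succ.
have := CV_disk_DAlembert a r 1 a_neq0 ratio (or_intror (conj R1_neq_R0 _)).
rewrite Rinv_1 => /(_ r_lt1) /ex_series_lim_0 /(proj2 (is_lim_seq_abs_0 _)) lim_a.
apply/is_lim_seq_incr_1.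
have := is_lim_seq_mult' _ _ _ _ lim_a (is_lim_seq_const r).
by rewrite Rmult_0_l; apply: is_lim_seq_ext => n; rewrite /a -tech_pow_Rmult; ring.
Qed.

Lemma is_lim_seq_poly_geom (a b c r : R) :
  Rabs r < 1 -> is_lim_seq (fun n => (a + b * INR n + c * INR n ^ 2) * r ^ n) 0.
Proof.
move=> r_lt1; have lim k := is_lim_seq_pow_mul_geom k r_lt1.
have lim_scal k e := is_lim_seq_mult' _ _ e _ (is_lim_seq_const e) (lim k).
have := is_lim_seq_plus' _ _ _ _ (is_lim_seq_plus' _ _ _ _ (lim_scal 0%N a) (lim_scal 1%N b))
  (lim_scal 2%N c).
rewrite !Rmult_0_r !Rplus_0_r; apply: is_lim_seq_ext => n /=; ring.
Qed.

Lemma infinite_sum_ext (u v : nat -> R) (l : R) :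
  (forall n, u n = v n) -> infinite_sum u l -> infinite_sum v l.
Proof.
by move=> uv /is_series_Reals sum_u; apply/is_series_Reals/(is_series_ext _ _ _ uv).
Qed.

Lemma infinite_sum_telescope (Phi : nat -> R) :
  is_lim_seq Phi 0 -> infinite_sum (fun j => Phi j.-1 - Phi j) (Phi 0%N).
Proof.
move=> lim_Phi; apply/is_lim_seq_Reals.
have partial n : sum_f_R0 (fun j => Phi j.-1 - Phi j) n = Phi 0%N - Phi n.
  by elim: n => [|n IHn] /=; [ring | rewrite IHn; ring].
have := is_lim_seq_minus' _ _ _ _ (is_lim_seq_const (Phi 0%N)) lim_Phi.
by rewrite Rminus_0_r; apply: is_lim_seq_ext => n; rewrite partial.
Qed.

(* Abel summation: [h j * (D j.-1 - D j)] telescopes with potential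
   [h j * D j + T j]. *)
Lemma infinite_sum_by_parts (f h D T : nat -> R) (l : R) :
  (forall j, f j = h j * (D j.-1 - D j)) ->
  (forall j, T j - T j.+1 = (h j.+1 - h j) * D j) ->
  is_lim_seq (fun j => h j * D j + T j) 0 ->
  h 0%N * D 0%N + T 0%N = l ->
  infinite_sum f l.
Proof.
move=> fE T_step /infinite_sum_telescope sum_Phi <-.
apply: infinite_sum_ext sum_Phi => -[|j]; rewrite fE /=; first ring.
by have := T_step j; lra.
Qed.

(** * Moments of the example *)

Lemma FbarE (i j : nat) :
  Fbar i j = if (i <= j)%N then (2/5) ^ i * (1/2) ^ j else (1/2) ^ i * (2/5) ^ j.
Proof.
by rewrite /Fbar; case: leqP => _; [apply: Rmult_comm | by []].
Qed.

(* Closed forms of [\sum_(m >= j) Fbar i m] and [\sum_(m >= j) (2m+1) Fbar i m];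
   the weight [2m+1 = (m+1)^2 - m^2] is what summation by parts against [j^2]
   produces. *)
Definition Fbar_tail (i j : nat) : R :=
  if (i <= j)%N then 2 * ((2/5) ^ i * (1/2) ^ j)
  else 5/3 * ((1/2) ^ i * (2/5) ^ j) + 1/3 * ((1/2) ^ i * (2/5) ^ i).

Definition Fbar_tail_odd (i j : nat) : R :=
  if (i <= j)%N then (2/5) ^ i * (1/2) ^ j * (4 * INR j + 6)
  else (1/2) ^ i * (2/5) ^ j * (30 * INR j + 35) / 9
       + (1/2) ^ i * (2/5) ^ i * (6 * INR i + 19) / 9.

Lemma Fbar_tail_step (i j : nat) : Fbar i j = Fbar_tail i j - Fbar_tail i j.+1.
Proof.
rewrite FbarE /Fbar_tail; case: (leqP i j) => [le_ij | lt_ji].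
  by rewrite (leqW le_ij) -tech_pow_Rmult; field.
case: (leqP i j.+1) => [le_iSj | _]; last by rewrite -!tech_pow_Rmult; field.
have -> : i = j.+1 by apply/eqP; rewrite eqn_leq le_iSj lt_ji.
by rewrite -!tech_pow_Rmult; field.
Qed.

Lemma Fbar_tail_odd_step (i j : nat) :
  (2 * INR j + 1) * Fbar i j = Fbar_tail_odd i j - Fbar_tail_odd i j.+1.
Proof.
rewrite FbarE /Fbar_tail_odd S_INR; case: (leqP i j) => [le_ij | lt_ji].
  by rewrite (leqW le_ij) -tech_pow_Rmult; field.
case: (leqP i j.+1) => [le_iSj | _]; last by rewrite -!tech_pow_Rmult; field.
have -> : i = j.+1 by apply/eqP; rewrite eqn_leq le_iSj lt_ji.
by rewrite S_INR -!tech_pow_Rmult; field.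
Qed.

Lemma Fbar_tail_le (i j : nat) : (i <= j)%N -> Fbar_tail i j = 2 * ((2/5) ^ i * (1/2) ^ j).
Proof. by rewrite /Fbar_tail => ->. Qed.

Lemma Fbar_tail_odd_le (i j : nat) : (i <= j)%N ->
  Fbar_tail_odd i j = (2/5) ^ i * (1/2) ^ j * (4 * INR j + 6).
Proof. by rewrite /Fbar_tail_odd => ->. Qed.

Lemma Fbar_tail0 (i : nat) : (0 < i)%N ->
  Fbar_tail i 0 = 5/3 * (1/2) ^ i + 1/3 * (1/2 * (2/5)) ^ i.
Proof. by rewrite /Fbar_tail leqn0 Rpow_mult_distr => /lt0n_neq0 /negbTE -> /=; ring. Qed.

Lemma Fbar_tail_odd0 (i : nat) : (0 < i)%N ->
  Fbar_tail_odd i 0 = 35/9 * (1/2) ^ i + (19/9 + 2/3 * INR i) * (1/2 * (2/5)) ^ i.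
Proof. by rewrite /Fbar_tail_odd leqn0 Rpow_mult_distr => /lt0n_neq0 /negbTE -> /=; field. Qed.

(* [dFbar i j = P(tau_1 = i, tau_2 > j)] *)
Definition dFbar (i j : nat) : R := Fbar i.-1 j - Fbar i j.

Lemma pmf2_Fbar (i j : nat) : pmf2 Fbar i j = dFbar i j.-1 - dFbar i j.
Proof. by rewrite /pmf2 /dFbar; ring. Qed.

Lemma dFbar_le (i j : nat) : (i <= j)%N ->
  dFbar i j = ((2/5) ^ i.-1 - (2/5) ^ i) * (1/2) ^ j.
Proof.
move=> le_ij; rewrite /dFbar !FbarE le_ij (leq_trans (leq_pred i) le_ij); ring.
Qed.

Lemma Rabs_half_lt1 : Rabs (1/2) < 1.
Proof. by rewrite Rabs_pos_eq; lra. Qed.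

Lemma Rabs_fifth_lt1 : Rabs (1/2 * (2/5)) < 1.
Proof. by rewrite Rabs_pos_eq; lra. Qed.

Lemma sum_pmf2_Fbar_const (c : R) (i : nat) :
  infinite_sum (fun j => c * pmf2 Fbar i j) (c * dFbar i 0).
Proof.
apply: (@infinite_sum_by_parts _ (fun _ => c) (dFbar i) (fun _ => 0)).
- by move=> j; rewrite pmf2_Fbar.
- by move=> j; ring.
- apply: is_lim_seq_ext_loc
    (is_lim_seq_poly_geom (c * ((2/5) ^ i.-1 - (2/5) ^ i)) 0 0 Rabs_half_lt1).
  by exists i => j /leP le_ij; rewrite dFbar_le //; ring.
- ring.
Qed.

Lemma sum_pmf2_Fbar_lin (c : R) (i : nat) :
  infinite_sum (fun j => c * INR j * pmf2 Fbar i j)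
    (c * (Fbar_tail i.-1 0 - Fbar_tail i 0)).
Proof.
apply: (@infinite_sum_by_parts _ (fun j => c * INR j) (dFbar i)
          (fun j => c * (Fbar_tail i.-1 j - Fbar_tail i j))).
- by move=> j; rewrite pmf2_Fbar.
- by move=> j; rewrite /dFbar !Fbar_tail_step S_INR; ring.
- apply: is_lim_seq_ext_loc (is_lim_seq_poly_geom (2 * c * ((2/5) ^ i.-1 - (2/5) ^ i))
    (c * ((2/5) ^ i.-1 - (2/5) ^ i)) 0 Rabs_half_lt1).
  exists i => j /leP le_ij; have le_pj := leq_trans (leq_pred i) le_ij.
  by rewrite dFbar_le // !Fbar_tail_le //; ring.
- by rewrite /=; ring.
Qed.

Lemma sum_pmf2_Fbar_sq (i : nat) :
  infinite_sum (fun j => INR j ^ 2 * pmf2 Fbar i j)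
    (Fbar_tail_odd i.-1 0 - Fbar_tail_odd i 0).
Proof.
apply: (@infinite_sum_by_parts _ (fun j => INR j ^ 2) (dFbar i)
          (fun j => Fbar_tail_odd i.-1 j - Fbar_tail_odd i j)).
- by move=> j; rewrite pmf2_Fbar.
- move=> j; have -> : INR j.+1 ^ 2 - INR j ^ 2 = 2 * INR j + 1 by rewrite S_INR; ring.
  by rewrite /dFbar Rmult_minus_distr_l !Fbar_tail_odd_step; ring.
- apply: is_lim_seq_ext_loc (is_lim_seq_poly_geom (6 * ((2/5) ^ i.-1 - (2/5) ^ i))
    (4 * ((2/5) ^ i.-1 - (2/5) ^ i)) ((2/5) ^ i.-1 - (2/5) ^ i) Rabs_half_lt1).
  exists i => j /leP le_ij; have le_pj := leq_trans (leq_pred i) le_ij.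
  by rewrite dFbar_le // !Fbar_tail_odd_le //; ring.
- by rewrite /=; ring.
Qed.

Lemma Fbar_tail00 : Fbar_tail 0 0 = 2.
Proof. by rewrite Fbar_tail_le //=; ring. Qed.

Lemma Fbar_tail_odd00 : Fbar_tail_odd 0 0 = 6.
Proof. by rewrite Fbar_tail_odd_le //=; ring. Qed.

Lemma Fbar_col0 (i : nat) : Fbar i 0 = (1/2) ^ i.
Proof. by rewrite Fbar_sym FbarE /=; ring. Qed.

Lemma sum_dFbar0_lin : infinite_sum (fun i => INR i * dFbar i 0) 2.
Proof.
apply: (@infinite_sum_by_parts _ INR (fun i => Fbar i 0) (Fbar_tail 0)) => //.
- by move=> i; rewrite -Fbar_tail_step Fbar_sym S_INR; ring.
- apply: is_lim_seq_ext_loc (is_lim_seq_poly_geom 2 1 0 Rabs_half_lt1).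
  by exists 0%N => i _; rewrite Fbar_col0 Fbar_tail_le //=; ring.
- by rewrite Fbar_tail00 /=; ring.
Qed.

Lemma sum_dFbar0_sq : infinite_sum (fun i => INR i ^ 2 * dFbar i 0) 6.
Proof.
apply: (@infinite_sum_by_parts _ (fun i => INR i ^ 2) (fun i => Fbar i 0)
          (Fbar_tail_odd 0)) => //.
- by move=> i; rewrite -Fbar_tail_odd_step Fbar_sym S_INR; ring.
- apply: is_lim_seq_ext_loc (is_lim_seq_poly_geom 6 4 1 Rabs_half_lt1).
  by exists 0%N => i _; rewrite Fbar_col0 Fbar_tail_odd_le //=; ring.
- by rewrite Fbar_tail_odd00 /=; ring.
Qed.

Lemma sum_Fbar_tail0 : infinite_sum (fun i => Fbar_tail i.-1 0 - Fbar_tail i 0) 2.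
Proof.
rewrite -Fbar_tail00; apply: infinite_sum_telescope.
have := is_lim_seq_plus' _ _ _ _ (is_lim_seq_poly_geom (5/3) 0 0 Rabs_half_lt1)
  (is_lim_seq_poly_geom (1/3) 0 0 Rabs_fifth_lt1).
rewrite Rplus_0_r => lim; apply: is_lim_seq_ext_loc lim.
by exists 1%N => i /leP lt0i; rewrite Fbar_tail0 //; ring.
Qed.

Lemma sum_Fbar_tail_odd0 :
  infinite_sum (fun i => Fbar_tail_odd i.-1 0 - Fbar_tail_odd i 0) 6.
Proof.
rewrite -Fbar_tail_odd00; apply: infinite_sum_telescope.
have := is_lim_seq_plus' _ _ _ _ (is_lim_seq_poly_geom (35/9) 0 0 Rabs_half_lt1)
  (is_lim_seq_poly_geom (19/9) (2/3) 0 Rabs_fifth_lt1).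
rewrite Rplus_0_r => lim; apply: is_lim_seq_ext_loc lim.
by exists 1%N => i /leP lt0i; rewrite Fbar_tail_odd0 //; ring.
Qed.

(* The antiderivative [T i = \sum_(m >= i) Fbar_tail m 0]. *)
Lemma sum_Fbar_tail0_lin :
  infinite_sum (fun i => INR i * (Fbar_tail i.-1 0 - Fbar_tail i 0)) (15/4).
Proof.
apply: (@infinite_sum_by_parts _ INR (fun i => Fbar_tail i 0)
          (fun i => 10/3 * (1/2) ^ i + 5/12 * (1/2 * (2/5)) ^ i)) => //.
- case=> [|i]; first by rewrite Fbar_tail00 /=; field.
  by rewrite Fbar_tail0 // S_INR -!tech_pow_Rmult; field.
- have := is_lim_seq_plus' _ _ _ _ (is_lim_seq_poly_geom (10/3) (5/3) 0 Rabs_half_lt1)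
    (is_lim_seq_poly_geom (5/12) (1/3) 0 Rabs_fifth_lt1).
  rewrite Rplus_0_r => lim; apply: is_lim_seq_ext_loc lim.
  by exists 1%N => i /leP lt0i; rewrite Fbar_tail0 //; ring.
- by rewrite /=; field.
Qed.

Lemma correlation2_Fbar : correlation2 Fbar (- (1/8)).
Proof.
exists 2, 2, 6, 6, (15/4); split; [|split; [|split; [|split; [|split]]]].
- exists (fun i => INR i * dFbar i 0); split; last exact: sum_dFbar0_lin.
  by move=> i; exact: sum_pmf2_Fbar_const.
- exists (fun i => Fbar_tail i.-1 0 - Fbar_tail i 0); split; last exact: sum_Fbar_tail0.
  move=> i; rewrite -[X in infinite_sum _ X]Rmult_1_l.
  by apply: infinite_sum_ext (sum_pmf2_Fbar_lin 1 i) => j; ring.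
- exists (fun i => INR i ^ 2 * dFbar i 0); split; last exact: sum_dFbar0_sq.
  by move=> i; exact: sum_pmf2_Fbar_const.
- exists (fun i => Fbar_tail_odd i.-1 0 - Fbar_tail_odd i 0).
  by split; [exact: sum_pmf2_Fbar_sq | exact: sum_Fbar_tail_odd0].
- exists (fun i => INR i * (Fbar_tail i.-1 0 - Fbar_tail i 0)); split; last first.
    exact: sum_Fbar_tail0_lin.
  by move=> i; exact: sum_pmf2_Fbar_lin.
have -> : (6 - 2 ^ 2) * (6 - 2 ^ 2) = 2 * 2 by rewrite /=; ring.
by rewrite sqrt_square /=; [split; [lra | split; [lra | field]] | lra].
Qed.

Theorem mainTheorem11 :
  (forall (d : nat) (p : {set 'I_d} -> R),
      narrow_valid p ->
      exists q : {set 'I_d} -> R,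
        wide_valid q /\ forall n : 'I_d -> nat, wide_surv q n = narrow_surv p n)
  /\
  ((exists q : {set 'I_2} -> R,
       wide_valid q /\ forall n : 'I_2 -> nat, wide_surv q n = Fbar2 n) /\
   (forall n1 n2 : nat, Fbar n1 n2 = Fbar n2 n1) /\
   ~ (exists p : {set 'I_2} -> R,
        narrow_valid p /\ forall n : 'I_2 -> nat, narrow_surv p n = Fbar2 n) /\
   correlation2 Fbar (Ropp (Rdiv 1 8))).
Proof.
split.
  move=> d p p_valid; exists (wide_of_narrow p).
  by split; [exact: wide_of_narrow_valid | exact: wide_surv_wide_of_narrow].
split; first by exists Fbar_wide; split; [exact: Fbar_wide_valid | exact: wide_surv_Fbar_wide].
split; first exact: Fbar_sym.
split; last exact: correlation2_Fbar.
by case=> p [p_valid]; exact: Fbar_not_narrow.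
Qed.
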